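(* Let $n\ge0$. Every $f\in Mlt(Q_n)$ has order $1$, $2$ or $4$; in particular $f$ is a product of disjoint $2$-cycles and $4$-cycles.
   Context: Cayley--Dickson loops: $Q_0=\{1,-1\}\subset\mathbb{R}$ with conjugation $x^*=x$. For $n\ge1$, $Q_n=\{(x,0),(x,1)\mid x\in Q_{n-1}\}$ with multiplication $(x,0)(y,0)=(xy,0)$, $(x,0)(y,1)=(yx,1)$, $(x,1)(y,0)=(xy^*,1)$, $(x,1)(y,1)=(-y^*x,0)$ and conjugation $(x,0)^*=(x^*,0)$, $(x,1)^*=(-x,1)$, where $-(x,a)=(-x,a)$. $Q_n$ is a loop with neutral element $1=(1,0,\dots,0)$. For a loop $Q$, $L_x(a)=xa$, $R_x(a)=ax$, $Mlt(Q)=\langle L_x,R_x\mid x\in Q\rangle\le Sym(Q)$. *)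

From HB Require Import structures.
From mathcomp Require Import all_boot all_fingroup.
Set Implicit Arguments. Unset Strict Implicit. Unset Printing Implicit Defensive.

(* Carrier of the Cayley--Dickson loop Q_n.
   Q_0 = {1,-1} is encoded by bool (false = 1, true = -1);
   Q_{n+1} = Q_n * bool, the pair (x, a) with a = false meaning 0, true meaning 1. *)
Fixpoint CD (n : nat) : finType :=
  if n is n'.+1 then (CD n' * bool)%type else bool.

Fixpoint cd_neg (n : nat) : CD n -> CD n :=
  match n as m return CD m -> CD m with
  | 0 => negb
  | n'.+1 => fun p => (cd_neg p.1, p.2)
  end.

Fixpoint cd_conj (n : nat) : CD n -> CD n :=
  match n as m return CD m -> CD m with
  | 0 => id
  | n'.+1 => fun p => if p.2 then (cd_neg p.1, true) else (cd_conj p.1, false)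
  end.

(* Multiplication:
   (x,0)(y,0) = (xy,0), (x,0)(y,1) = (yx,1),
   (x,1)(y,0) = (xy^*,1), (x,1)(y,1) = (-(y^* x),0);
   on Q_0 it is multiplication of signs (xor). *)
Fixpoint cd_mul (n : nat) : CD n -> CD n -> CD n :=
  match n as m return CD m -> CD m -> CD m with
  | 0 => addb
  | n'.+1 => fun p q =>
      match p.2, q.2 with
      | false, false => (cd_mul p.1 q.1, false)
      | false, true => (cd_mul q.1 p.1, true)
      | true, false => (cd_mul p.1 (cd_conj q.1), true)
      | true, true => (cd_neg (cd_mul (cd_conj q.1) p.1), false)
      end
  end.

Fixpoint cd_one (n : nat) : CD n :=
  match n as m return CD m with
  | 0 => false
  | n'.+1 => (cd_one n', false)
  end.

(* The permutations of Q_n that coincide with some left translation L_x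
   or some right translation R_x.  Since Q_n is a loop, these are exactly
   the maps L_x, R_x (x in Q_n). *)
Definition translations (n : nat) : {set {perm CD n}} :=
  [set p : {perm CD n} | [exists x : CD n,
      [forall a : CD n, p a == cd_mul x a] || [forall a : CD n, p a == cd_mul a x]]].

Definition Mlt (n : nat) : {set {perm CD n}} := <<translations n>>%g.

From mathcomp Require Import all_boot all_fingroup.
From mathcomp Require Import cyclic.
Set Implicit Arguments. Unset Strict Implicit. Unset Printing Implicit Defensive.

(* The sign-forgetting map |.| : Q_n -> Q_n / {1,-1} lands in an elementary
   abelian 2-group (componentwise xor of the "imaginary unit" labels), and it
   is a homomorphism: |xy| = |x| (+) |y|.  Consequently each translation L_x,
   R_x is "sign-affine": it commutes with negation and acts on absolute values
   as a translation |a| |-> k (+) |a| of the 2-group.  Sign-affine permutations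
   form a group, so they contain Mlt(Q_n).  For a sign-affine f we get
   |f (f a)| = k (+) k (+) |a| = |a|, i.e. f^2 a = +-a, and commuting with
   negation then gives f^4 = 1.  Finally, for any permutation with f^4 = 1
   the order and every cycle length divide 4, hence lie in {1, 2, 4}. *)

Lemma neg_involutive n (x : CD n) : cd_neg (cd_neg x) = x.
Proof. elim: n x => [|n IH] [] //=; by [case | move=> x b; rewrite IH]. Qed.

Lemma conj_neg n (x : CD n) : cd_conj (cd_neg x) = cd_neg (cd_conj x).
Proof. elim: n x => [|n IH] //= [x []] //=; by rewrite IH. Qed.

(* Both halves must be proved together: each recursive case of one
   invokes the other. *)
Lemma mul_neg n (x y : CD n) :
  cd_mul x (cd_neg y) = cd_neg (cd_mul x y) /\
  cd_mul (cd_neg x) y = cd_neg (cd_mul x y).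
Proof.
elim: n x y => [|n IH] /=; first by move=> x y; rewrite addbN addNb.
move=> [x a] [y b] /=; case: a; case: b => /=;
  by rewrite ?conj_neg ?(proj1 (IH _ _)) ?(proj2 (IH _ _)).
Qed.

Lemma mul_negr n (x y : CD n) : cd_mul x (cd_neg y) = cd_neg (cd_mul x y).
Proof. exact: (mul_neg x y).1. Qed.

Lemma mul_negl n (x y : CD n) : cd_mul (cd_neg x) y = cd_neg (cd_mul x y).
Proof. exact: (mul_neg x y).2. Qed.

(* The absolute value |x| forgets all signs; the quotient Q_n/{1,-1} is the
   elementary abelian group (Z/2)^n with operation cd_xor. *)

Fixpoint cd_abs (n : nat) : CD n -> CD n :=
  match n as m return CD m -> CD m with
  | 0 => fun _ => false
  | n'.+1 => fun p => (cd_abs p.1, p.2)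
  end.

Fixpoint cd_xor (n : nat) : CD n -> CD n -> CD n :=
  match n as m return CD m -> CD m -> CD m with
  | 0 => fun _ _ => false
  | n'.+1 => fun p q => (cd_xor p.1 q.1, addb p.2 q.2)
  end.

Lemma abs_neg n (x : CD n) : cd_abs (cd_neg x) = cd_abs x.
Proof. elim: n x => [|n IH] //= [x b] /=; by rewrite IH. Qed.

Lemma abs_conj n (x : CD n) : cd_abs (cd_conj x) = cd_abs x.
Proof. elim: n x => [|n IH] //= [x []] /=; by rewrite ?abs_neg ?IH. Qed.

Lemma xorC n (x y : CD n) : cd_xor x y = cd_xor y x.
Proof. elim: n x y => [|n IH] //= [x a] [y b] /=; by rewrite IH addbC. Qed.

Lemma xorA n (x y z : CD n) : cd_xor x (cd_xor y z) = cd_xor (cd_xor x y) z.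
Proof. elim: n x y z => [|n IH] //= [x a] [y b] [z c] /=; by rewrite IH addbA. Qed.

Lemma xor_absr n (x y : CD n) : cd_xor x (cd_abs y) = cd_xor x y.
Proof. elim: n x y => [|n IH] //= [x a] [y b] /=; by rewrite IH. Qed.

Lemma xorxx n (x : CD n) : cd_xor x x = cd_one n.
Proof. elim: n x => [|n IH] //= [x a] /=; by rewrite IH addbb. Qed.

Lemma xor1 n (x : CD n) : cd_xor (cd_one n) x = cd_abs x.
Proof. elim: n x => [|n IH] //= [x a] /=; by rewrite IH. Qed.

Lemma abs_mul n (x y : CD n) : cd_abs (cd_mul x y) = cd_xor x y.
Proof.
elim: n x y => [|n IH] //= [x a] [y b] /=; case: a; case: b => /=;
  rewrite ?abs_neg IH //.
- by rewrite xorC -xor_absr abs_conj xor_absr.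
- by rewrite -xor_absr abs_conj xor_absr.
- by rewrite xorC.
Qed.

Lemma abs_inj_sign n (a b : CD n) : cd_abs b = cd_abs a -> b = a \/ b = cd_neg a.
Proof.
elim: n a b => [|n IH] /=; first by move=> [] [] _; auto.
move=> [a x] [b y] /= [] /IH [] -> ->; auto.
Qed.

Definition sign_affine n (f : {perm CD n}) : bool :=
  [exists k : CD n, [forall a : CD n,
     (cd_abs (f a) == cd_xor k a) && (f (cd_neg a) == cd_neg (f a))]].

Lemma sign_affineP n (f : {perm CD n}) :
  reflect (exists k, forall a,
             cd_abs (f a) = cd_xor k a /\ f (cd_neg a) = cd_neg (f a))
          (sign_affine f).
Proof.
apply: (iffP existsP) => [[k /forallP Hk] | [k Hk]]; exists k.
  by move=> a; have /andP [/eqP -> /eqP ->] := Hk a.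
by apply/forallP => a; have [-> ->] := Hk a; rewrite !eqxx.
Qed.

Lemma sign_affine_group n : group_set [set f : {perm CD n} | sign_affine f].
Proof.
apply/andP; split.
  rewrite inE; apply/sign_affineP; exists (cd_one n) => a.
  by rewrite !perm1 xor1.
apply/subsetP => h /mulsgP [f g]; rewrite !inE.
move=> /sign_affineP [kf Hf] /sign_affineP [kg Hg] ->.
apply/sign_affineP; exists (cd_xor kg kf) => a; rewrite !permM.
have [Af Nf] := Hf a; have [Ag Ng] := Hg (f a).
by rewrite Ag -xor_absr Af xorA Nf Ng.
Qed.

Lemma translations_sign_affine n (p : {perm CD n}) :
  p \in translations n -> sign_affine p.
Proof.
rewrite inE => /existsP [x /orP [] /forallP H]; apply/sign_affineP;
  exists x => a; move: (H a) (H (cd_neg a)) => /eqP -> /eqP ->.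
- by rewrite abs_mul mul_negr.
- by rewrite abs_mul xorC mul_negl.
Qed.

Lemma Mlt_sign_affine n (f : {perm CD n}) : f \in Mlt n -> sign_affine f.
Proof.
have sub : Mlt n \subset Group (sign_affine_group n).
  rewrite /Mlt gen_subG; apply/subsetP => p Tp.
  by rewrite inE; exact: translations_sign_affine.
by move=> /(subsetP sub); rewrite inE.
Qed.

Lemma sign_affine_sq n (f : {perm CD n}) a :
  sign_affine f -> f (f a) = a \/ f (f a) = cd_neg a.
Proof.
move=> /sign_affineP [k H]; apply: abs_inj_sign.
have [A1 _] := H (f a); have [A2 _] := H a.
by rewrite A1 -xor_absr A2 xorA xorxx xor1.
Qed.

Lemma sign_affine_expg4 n (f : {perm CD n}) : sign_affine f -> (f ^+ 4 = 1)%g.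
Proof.
move=> Af; apply/permP => a; rewrite permX perm1 /=.
have [E | E] := sign_affine_sq a Af; rewrite E; first by rewrite E.
have /sign_affineP [k H] := Af.
by rewrite (H a).2 (H (f a)).2 E neg_involutive.
Qed.

Lemma divisors_of_4 d : (0 < d)%N -> (d %| 4)%N -> d \in [:: 1; 2; 4].
Proof.
move=> d0 dd; have := dvdn_leq (isT : (0 < 4)%N) dd.
by move: d0 dd; case: d => [|[|[|[|[|]]]]].
Qed.

Lemma card_porbit_dvd_order (T : finType) (f : {perm T}) x :
  (#|porbit f x| %| #[f]%g)%N.
Proof.
by rewrite porbitE -[X in (_ %| X)%N](card_orbit_stab 'P <[f]>%g x) dvdn_mulr.
Qed.

Lemma perm_expg4_cycle_type (T : finType) (f : {perm T}) :
  (f ^+ 4 = 1)%g ->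
  (#[f]%g \in [:: 1; 2; 4]) && [forall x : T, #|porbit f x| \in [:: 1; 2; 4]].
Proof.
move=> f4; have ord_dvd : (#[f]%g %| 4)%N by rewrite order_dvdn f4.
apply/andP; split; first by apply: divisors_of_4 => //; exact: order_gt0.
apply/forallP => x; apply: divisors_of_4; first by rewrite lt0n card_porbit_neq0.
exact: dvdn_trans (card_porbit_dvd_order f x) ord_dvd.
Qed.

Theorem mainTheorem6 (n : nat) (f : {perm CD n}) :
  f \in Mlt n ->
  (#[f]%g \in [:: 1; 2; 4]) &&
  [forall x : CD n, #|porbit f x| \in [:: 1; 2; 4]].
Proof.
move=> /Mlt_sign_affine /sign_affine_expg4.
exact: perm_expg4_cycle_type.
Qed.
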